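(* Let $2\le n\le+\infty$ and let $\{a_i\}_{i=1}^n$ be a non-increasing $n$-tuple (sequence if $n=+\infty$) of positive numbers with $\sum_{i=1}^n a_i\le 1$ and $\sum_{i=1}^n\eta(a_i)<+\infty$. Let $I_n=\mathbb{N}\cap[1,n]$, $b>0$, $c\ge0$, and $$\Omega=\Big\{\{x_i\}_{i=1}^n\ :\ x_1\in[0,c],\ x_i\in\mathbb{R},\ x_{i-1}\le x_i\ \forall i\in I_n\setminus\{1\},\ \sum_{i=1}^n a_ix_i=1\Big\}.$$ Then there exists a unique $n$-tuple $\bar{x}_b=\{x^b_i\}_{i=1}^n$ of nonnegative numbers belonging to $\Omega$ such that $$\sum_{i=1}^n e^{-bx^b_i}=\inf\Big\{\sum_{i=1}^n e^{-bx_i}\ :\ \{x_i\}_{i=1}^n\in\Omega\Big\}.$$ Define $d_k=\sum_{i=k+1}^n a_i$ and $s_k=\sum_{i=k+1}^n\eta(a_i)$ for $k\in\{0\}\cup I_{n-1}$, and the non-increasing family $b_0=\frac{s_0+d_0\ln a_1}{1-cd_0}$ if $cd_0<1$, $b_0=+\infty$ if $cd_0\ge1$; $b_k=s_{k-1}+d_{k-1}\ln a_k$ for $k\in I_n$; $b_n=0$ if $n<+\infty$. Then: <ul> <li>If $b\in[b_1,b_0]\cap(0,+\infty)$, then $x^b_i=\frac1b\left(\frac{b-s_0}{d_0}-\ln a_i\right)$ for $i\in I_n$, and $\sum_{i=1}^n e^{-bx^b_i}=d_0e^{\frac{s_0-b}{d_0}}$.</li> <li>If $b\in[b_{k+1},b_k)\cap(0,+\infty)$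 for some $k\in I_{n-1}$, then $x^b_i=0$ for $1\le i\le k$, $x^b_i=\frac1b\left(\frac{b-s_k}{d_k}-\ln a_i\right)$ for $i\in I_n\setminus\{1,\dots,k\}$, and $\sum_{i=1}^n e^{-bx^b_i}=k+d_ke^{\frac{s_k-b}{d_k}}$.</li> <li>If $b_0<+\infty$ and $b>b_0$, then $x^b_1=c$, $x^b_i=\frac1b\left(\frac{b(1-a_1c)-s_1}{d_1}-\ln a_i\right)$ for $i\in I_n\setminus\{1\}$, and $\sum_{i=1}^n e^{-bx^b_i}=e^{-bc}\left(1+d_1e^{\frac{s_1-b(1-cd_0)}{d_1}}\right)$.</li> </ul> For each $i\in I_n$ the function $b\mapsto x^b_i$ is continuous on $(0,+\infty)$. For any $b>0$ and $c>0$ the infimum above equals $$z_c(b)=\sum_{k=0}^{n-1}\mathbf{1}_{B_k}(b)\left(k+d_ke^{\frac{s_k-b}{d_k}}\right)+\mathbf{1}_{B_c}(b)\,e^{-bc}\left(1+d_1e^{\frac{s_1-b(1-cd_0)}{d_1}}\right),$$ where $B_k=[b_{k+1},b_k)$ for $k\in\{0\}\cup I_{n-1}$ and $B_c=[b_0,+\infty)$. If $c=0$, then $b_1=b_0$ and for any $b>0$ the infimum above equals $$z_0(b)=\sum_{k=1}^{n-1}\mathbf{1}_{B'_k}(b)\left(k+d_ke^{\frac{s_k-b}{d_k}}\right),$$ where $B'_k=[b_{k+1},b_k)$ for $k\in I_{n-1}\setminus\{1\}$ and $B'_1=[b_2,+\infty)$.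
   Context: $\eta(x)=-x\ln x$ for $x>0$, $\eta(0)=0$. An $n$-tuple with $n=+\infty$ means a sequence. Intervals $(a,b]$ with $b=+\infty$ mean $(a,+\infty)$. $\mathbf{1}_B$ denotes the indicator function of a set $B$. *)

From HB Require Import structures.
From mathcomp Require Import all_boot all_order all_algebra.
From mathcomp Require Import all_classical all_reals all_analysis.
Set Implicit Arguments. Unset Strict Implicit. Unset Printing Implicit Defensive.
Import Order.TTheory GRing.Theory Num.Theory.
Local Open Scope ring_scope.

(* n in {2,...,+oo}: n = Some m means n = m, n = None means n = +oo. *)
Definition two_le (n : option nat) : Prop :=
  if n is Some m then (2 <= m)%N else True.

Definition le_n (n : option nat) (k : nat) : bool :=
  if n is Some m then (k <= m)%N else true.
Definition lt_n (n : option nat) (k : nat) : bool :=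
  if n is Some m then (k < m)%N else true.

Definition inI (n : option nat) (i : nat) : bool := (0 < i)%N && le_n n i.

Section Defs.
Variable R : realType.

Definition etaR (x : R) : R := if 0 < x then - (x * ln x) else 0.

(* tail sums d_k = sum_{i=k+1}^n a_i and s_k = sum_{i=k+1}^n etaR(a_i)
   (series of nonnegative terms, read in the extended reals, then as reals;
   under the hypotheses of lemma2 they are finite) *)
Definition dsum (n : option nat) (a : nat -> R) (k : nat) : R :=
  fine (\sum_(0 <= i <oo | (k < i)%N && inI n i) (a i)%:E)%E.
Definition ssum (n : option nat) (a : nat -> R) (k : nat) : R :=
  fine (\sum_(0 <= i <oo | (k < i)%N && inI n i) (etaR (a i))%:E)%E.

Definition bk (n : option nat) (a : nat -> R) (c : R) (k : nat) : \bar R :=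
  if k is k'.+1 then (ssum n a k' + dsum n a k' * ln (a k))%:E
  else if c * dsum n a 0 < 1 then
    ((ssum n a 0 + dsum n a 0 * ln (a 1%N)) / (1 - c * dsum n a 0))%:E
  else +oo%E.

Definition Omega (n : option nat) (a : nat -> R) (c : R) : set (nat -> R) :=
  [set x | [/\ 0 <= x 1%N <= c,
             (forall i, inI n i -> (1 < i)%N -> x i.-1 <= x i) &
             (\sum_(0 <= i <oo | inI n i) (a i * x i)%:E)%E = 1%E]].

Definition Fsum (n : option nat) (b : R) (x : nat -> R) : \bar R :=
  (\sum_(0 <= i <oo | inI n i) (expR (- (b * x i)))%:E)%E.

Definition infOmega (n : option nat) (a : nat -> R) (c b : R) : \bar R :=
  ereal_inf [set Fsum n b x | x in Omega n a c].

Definition inB (n : option nat) (a : nat -> R) (c : R) (k : nat) (b : R) : bool :=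
  ((bk n a c k.+1 <= b%:E) && (b%:E < bk n a c k))%E.

Definition termk (n : option nat) (a : nat -> R) (k : nat) (b : R) : R :=
  k%:R + dsum n a k * expR ((ssum n a k - b) / dsum n a k).

Definition termc (n : option nat) (a : nat -> R) (c b : R) : R :=
  expR (- (b * c)) *
  (1 + dsum n a 1 * expR ((ssum n a 1 - b * (1 - c * dsum n a 0)) / dsum n a 1)).

(* z_c(b); the indicator 1_B(b) * t is written (if b \in B then t else 0) *)
Definition zc (n : option nat) (a : nat -> R) (c b : R) : \bar R :=
  ((\sum_(0 <= k <oo | lt_n n k)
      (if inB n a c k b then (termk n a k b)%:E else 0))
   + (if (bk n a c 0 <= b%:E) then (termc n a c b)%:E else 0))%E.

Definition inB' (n : option nat) (a : nat -> R) (c : R) (k : nat) (b : R) : bool :=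
  if k == 1%N then (bk n a c 2 <= b%:E)%E else inB n a c k b.

Definition z0 (n : option nat) (a : nat -> R) (c b : R) : \bar R :=
  (\sum_(1 <= k <oo | lt_n n k)
      (if inB' n a c k b then (termk n a k b)%:E else 0))%E.

End Defs.

(* For fixed b > 0 the problem is convex.  With the multiplier
   lam = b e^(-nu), the tangent inequality for y |-> e^(-b y) shows that every
   coordinate x_i of the candidate strictly minimizes e^(-b y) + lam a_i y
   under the constraints y >= 0 (and y <= c when i = 1); summing over i and
   using sum_i a_i y_i = 1 on Omega gives F(x) <= F(y), with equality only for
   y = x.  The candidates freeze the first k coordinates at t (t = 0, or t = c
   with k = 1) and put x_i = (nu - ln a_i) / b for i > k, nu being fixed by the
   constraint; the thresholds b_k are exactly where these candidates satisfy
   the constraints and the sign conditions on the multiplier.  Since s_k -> 0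
   and ln a_k <= 0, the b_k decrease to 0, so the closed intervals
   [b_(k+1), b_k] and [b_0, +oo) cover (0, +oo).  By uniqueness, neighbouring
   formulas agree at the thresholds, whence the continuity of b |-> x^b_i. *)

From HB Require Import structures.
From mathcomp Require Import all_boot all_order all_algebra.
From mathcomp Require Import all_classical all_reals all_analysis.
From mathcomp Require Import zify ring lra.
Import Order.TTheory GRing.Theory Num.Theory.
Import numFieldNormedType.Exports.
Local Open Scope classical_set_scope.
Local Open Scope ring_scope.

(** * Series of nonnegative terms *)

Section series.
Context {R : realType}.
Implicit Types (f g : nat -> R) (Q : pred nat).

Lemma eseries_EFin_cvg m f Q (l : R) :
  (fun N => \sum_(m <= i < N | Q i) f i) @ \oo --> l ->
  (\sum_(m <= i <oo | Q i) (f i)%:E)%E = l%:E.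
Proof.
move=> fl; under eq_fun do rewrite sumEFin.
by apply: cvg_lim => //; apply: cvg_EFin fl; near=> N.
Unshelve. all: by end_near.
Qed.

Lemma eseries_single (u : (\bar R)^nat) Q m k :
  (m <= k)%N -> Q k -> (forall j, Q j -> j != k -> u j = 0%E) ->
  (\sum_(m <= j <oo | Q j) u j)%E = u k.
Proof.
move=> mk Qk u0; apply: cvg_lim => //; apply: cvg_near_cst; near=> N.
have kN : (k < N)%N by near: N; exists k.+1.
rewrite big_mkcond (bigD1_seq k) ?mem_index_iota ?mk ?iota_uniq //= Qk big1 ?adde0 //.
by move=> j jk; case: ifP => // Qj; exact: u0.
Unshelve. all: by end_near.
Qed.

Lemma nneseries_ge_term (u : (\bar R)^nat) Q k : (forall j, Q j -> (0 <= u j)%E) ->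
  Q k -> (u k <= \sum_(0 <= j <oo | Q j) u j)%E.
Proof.
move=> u0 Qk; rewrite -(@eseries_single u (pred1 k) 0 k) ?inE //.
  by apply: (subset_lee_nneseries 0 u0) => j /eqP ->.
by move=> j /eqP ->; rewrite eqxx.
Qed.

Lemma lt_nneseries_term {f g Q k} : (forall j, Q j -> 0 <= f j <= g j) ->
  Q k -> f k < g k -> (\sum_(0 <= j <oo | Q j) (f j)%:E < +oo)%E ->
  (\sum_(0 <= j <oo | Q j) (f j)%:E < \sum_(0 <= j <oo | Q j) (g j)%:E)%E.
Proof.
move=> fg Qk fgk ffin.
have f0 j : Q j -> (0 <= (f j)%:E)%E by move/fg/andP => [fj0 _]; rewrite lee_fin.
pose d j := (if j == k then g k - f k else 0)%:E.
have d0 j : Q j -> (0 <= d j)%E by rewrite /d; case: eqP; rewrite lee_fin // subr_ge0 ltW.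
have gap : (\sum_(0 <= j <oo | Q j) (f j)%:E < \sum_(0 <= j <oo | Q j) ((f j)%:E + d j))%E.
  rewrite nneseriesD => [|j _|j _]; [|exact: f0|exact: d0].
  rewrite (@eseries_single d _ 0 k) => [|//|//|j _ /negbTE]; last by rewrite /d => ->.
  rewrite /d eqxx lteDl ?lte_fin ?subr_gt0 // ge0_fin_numE //.
  by apply: nneseries_ge0 => j _; exact: f0.
apply: (lt_le_trans gap); apply: lee_nneseries => [j _ Qj|j Qj].
  by rewrite adde_ge0 ?f0 ?d0.
rewrite /d; case: eqP => [->|_]; first by rewrite -EFinD lee_fin addrC subrK.
by rewrite adde0 lee_fin; case/andP: (fg j Qj).
Qed.

(* [dsum n a] and [ssum n a] are [tailsum a (inI n)] and
   [tailsum (etaR \o a) (inI n)] up to conversion. *)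
Definition tailsum f Q k : R :=
  fine (\sum_(0 <= i <oo | (k < i)%N && Q i) (f i)%:E)%E.

Lemma tailsum_ge0 f Q k : (forall i, Q i -> 0 <= f i) -> 0 <= tailsum f Q k.
Proof.
by move=> f0; apply/fine_ge0/nneseries_ge0 => i _ /andP[_ /f0]; rewrite lee_fin.
Qed.

Lemma tailsum_eq0 f Q k : (forall i, (k < i)%N -> ~~ Q i) -> tailsum f Q k = 0.
Proof.
by move=> Q0; rewrite /tailsum eseries0 // => i _ /andP[/Q0 /negbTE ->].
Qed.

Lemma big_tailsum_peel f Q i N : (0 < i)%N -> Q i -> (i < N)%N ->
  \sum_(0 <= j < N | (i.-1 < j)%N && Q j) f j =
  f i + \sum_(0 <= j < N | (i < j)%N && Q j) f j.
Proof.
move=> i0 Qi iN; rewrite big_mkcond (bigD1_seq i) ?mem_index_iota ?iota_uniq //=.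
rewrite Qi andbT (_ : (i.-1 < i)%N) ?prednK //; congr (_ + _).
rewrite [LHS]big_mkcond [RHS]big_mkcond; apply: eq_bigr => j _.
by have [->|ji] := eqVneq j i; rewrite ?ltnn // (_ : (i <= j) = (i < j))%N //; lia.
Qed.

Section nonnegative_summable.
Context {f : nat -> R} {Q : pred nat}.
Hypotheses (f_ge0 : forall i, Q i -> 0 <= f i)
  (f_fin : (\sum_(0 <= i <oo | Q i) (f i)%:E < +oo)%E).

Lemma cvg_tailsum k :
  (fun N => \sum_(0 <= i < N | (k < i)%N && Q i) f i) @ \oo --> tailsum f Q k.
Proof.
have fE0 i : (k < i)%N && Q i -> (0 <= (f i)%:E)%E.
  by case/andP => _ /f_ge0; rewrite lee_fin.
have fin : (\sum_(0 <= i <oo | (k < i)%N && Q i) (f i)%:E)%E \is a fin_num.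
  rewrite ge0_fin_numE; last by apply: nneseries_ge0 => i _; exact: fE0.
  apply: (le_lt_trans _ f_fin).
  by apply: subset_lee_nneseries => [i /f_ge0|i /andP[]]; rewrite ?lee_fin.
have := @is_cvg_nneseries _ (fun i => (f i)%:E) _ 0 (fun i _ => fE0 i).
rewrite -(fineK fin) => /fine_cvg; apply: cvg_trans; apply: near_eq_cvg.
by near=> N; rewrite /= sumEFin.
Unshelve. all: by end_near.
Qed.

Lemma tailsum_peel {i} : (0 < i)%N -> Q i -> tailsum f Q i.-1 = f i + tailsum f Q i.
Proof.
move=> i0 Qi.
have peel : (fun N => \sum_(0 <= j < N | (i.-1 < j)%N && Q j) f j) @ \oo -->
    f i + tailsum f Q i.
  apply: cvg_trans (cvgD (cvg_cst (f i)) (cvg_tailsum i)); apply: near_eq_cvg.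
  near=> N; rewrite big_tailsum_peel //; near: N; exists i.+1 => //.
exact: (cvg_unique _ (cvg_tailsum i.-1) peel).
Unshelve. all: by end_near.
Qed.

Lemma tailsum_cvg0 : tailsum f Q @ \oo --> 0.
Proof.
have -> : tailsum f Q = fine \o (fun k => \sum_(k.+1 <= i <oo | Q i) (f i)%:E)%E.
  apply/funext => k; rewrite /tailsum /= [in RHS]eseries_cond; congr fine.
  by apply: eq_eseriesl => i; rewrite andbC.
apply: fine_cvg; rewrite (cvg_shiftS (fun N => \sum_(N <= i <oo | Q i) (f i)%:E)%E).
by apply: nneseries_tail_cvg => // i /f_ge0; rewrite lee_fin.
Qed.

End nonnegative_summable.
End series.

Section etaR.
Context {R : realType}.

Lemma etaRE (x : R) : 0 < x -> etaR x = - (x * ln x).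
Proof. by rewrite /etaR => ->. Qed.

Lemma etaR_ge0 (x : R) : x <= 1 -> 0 <= etaR x.
Proof.
rewrite /etaR; case: ifP => // x0 x1.
by rewrite oppr_ge0 mulr_ge0_le0 // ?ln_le0 // ltW.
Qed.

End etaR.

Section indices.
Context {n : option nat}.

Lemma inI_gt0 {i} : inI n i -> (0 < i)%N.
Proof. by case/andP. Qed.

Lemma inI_S {k} : lt_n n k -> inI n k.+1.
Proof. by case: n. Qed.

Lemma inI_le {k i} : lt_n n k -> (0 < i)%N -> (i <= k)%N -> inI n i.
Proof. by case: n => [m|] //= km i0 ik; rewrite /inI i0 /=; lia. Qed.

Lemma inI_pred {i} : inI n i -> (1 < i)%N -> inI n i.-1.
Proof. by case: n => [m|] /andP[i0 /= im] i1; rewrite /inI /=; lia. Qed.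

Lemma inI_mono {i j} : (0 < i)%N -> (i <= j)%N -> inI n j -> inI n i.
Proof. by move=> i0 ij /andP[_]; rewrite /inI i0; case: n => //= m; lia. Qed.

Lemma lt_n_le_n {k} : lt_n n k -> le_n n k.
Proof. by case: n => [m|] //= km; rewrite ltnW. Qed.

Lemma lt_n_pred {k} : lt_n n k.+1 -> lt_n n k.
Proof. by case: n => [m|] //= km; rewrite ltnW. Qed.

Lemma first_index (p : pred nat) : (exists j, p j) -> (forall m, n = Some m -> p m) ->
  p 0 \/ exists2 k, lt_n n k & p k.+1 && ~~ p k.
Proof.
move=> pex plast; case: (ex_minnP pex) => -[|k] pk kmin; [by left | right].
exists k; last by rewrite pk; apply/negP => /kmin; rewrite ltnn.
by case: n plast => [m|] //= plast; apply: kmin (plast m _).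
Qed.

Lemma big_inI_split {R : realType} {f : nat -> R} {k N} : lt_n n k -> (k < N)%N ->
  \sum_(0 <= i < N | inI n i) f i =
  \sum_(1 <= i < k.+1) f i + \sum_(0 <= i < N | (k < i)%N && inI n i) f i.
Proof.
move=> kn kN; rewrite (bigID (fun i => (i <= k)%N)) /=; congr (_ + _); last first.
  by apply: eq_bigl => i; rewrite -ltnNge andbC.
rewrite (eq_bigl (fun i => inI n i && (i < k.+1)%N)); last by move=> i; rewrite ltnS.
rewrite -big_nat_widen // (big_cat_nat (n := 1%N)) //= big_mkcond big_nat1 add0r.
rewrite big_nat_cond [RHS]big_nat_cond; apply: eq_bigl => i.
by case: (boolP ((1 <= i)%N && (i < k.+1)%N)) => //= /andP[i1 ik]; rewrite (inI_le kn).
Qed.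

Hypothesis hn : two_le n.

Lemma lt_n1 : lt_n n 1.
Proof. by case: n hn => [m|] //= hm; lia. Qed.

Lemma lt_n0 : lt_n n 0.
Proof. exact: lt_n_pred lt_n1. Qed.

Lemma inI1 : inI n 1.
Proof. exact: inI_S lt_n0. Qed.

Lemma inI_last {m} : n = Some m -> inI n m.
Proof. by move: hn => /[swap] ->; rewrite /inI /=; lia. Qed.

End indices.

Section lagrange_term.
Context {R : realType}.
Implicit Types b mu t x y : R.

(* A summand of the Lagrangian F(y) + lam (sum_i a_i y_i - 1), with mu = lam a_i. *)
Definition lagrange_term b mu y : R := expR (- (b * y)) + mu * y.

Lemma expRM_ge1E (u v : R) : 0 < v -> (1 <= expR u * v) = (- u <= ln v).
Proof.
by move=> v0; rewrite -{1}(lnK v0) -expRD -expR0 ler_expR; apply/idP/idP; lra.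
Qed.

Lemma expR_tangent_lt {b x y} : 0 < b -> y != x ->
  expR (- (b * x)) * (1 - b * (y - x)) < expR (- (b * y)).
Proof.
move=> b0 yx; have -> : - (b * y) = - (b * x) + - (b * (y - x)) by ring.
rewrite expRD ltr_pM2l ?expR_gt0 //; apply: expR_gt1Dx.
by rewrite oppr_eq0 mulf_neq0 ?subr_eq0 // gt_eqF.
Qed.

Lemma lagrange_term_argmin b mu x y : 0 < b -> mu = b * expR (- (b * x)) ->
  y = x \/ lagrange_term b mu x < lagrange_term b mu y.
Proof.
move=> b0 ->; have [->|yx] := eqVneq y x; [by left | right].
by have := expR_tangent_lt b0 yx; rewrite /lagrange_term; nra.
Qed.

Lemma lagrange_term_argmin0 b mu y : 0 < b -> b <= mu -> 0 <= y ->
  y = 0 \/ lagrange_term b mu 0 < lagrange_term b mu y.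
Proof.
move=> b0 bmu y0; have [->|y_neq0] := eqVneq y 0; [by left | right].
have := expR_tangent_lt b0 y_neq0; rewrite /lagrange_term !(mulr0, subr0, oppr0, expR0).
by nra.
Qed.

Lemma lagrange_term_argmin_top b mu t y : 0 < b -> mu <= b * expR (- (b * t)) ->
  y <= t -> y = t \/ lagrange_term b mu t < lagrange_term b mu y.
Proof.
move=> b0 mut yt; have [->|y_neq_t] := eqVneq y t; [by left | right].
by have := expR_tangent_lt b0 y_neq_t; rewrite /lagrange_term; nra.
Qed.

End lagrange_term.

Section gluing.
Context {R : realType}.

Lemma continuous_at_glue (f g h : R -> R) x :
  {for x, continuous g} -> {for x, continuous h} ->
  (\forall y \near x, y <= x -> f y = g y) ->
  (\forall y \near x, x <= y -> f y = h y) -> {for x, continuous f}.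
Proof.
move=> gx hx fg fh.
have fgx : f x = g x by apply: (nbhs_singleton fg).
have fhx : f x = h x by apply: (nbhs_singleton fh).
apply/cvgrPdist_lt => e e0; near=> y.
have [yx|xy] := lerP y x.
  rewrite fgx (near fg y) //; near: y; exact: (cvgrPdist_lt _ _).1 gx e e0.
rewrite fhx (near fh y) ?ltW //; near: y; exact: (cvgrPdist_lt _ _).1 hx e e0.
Unshelve. all: by end_near.
Qed.

End gluing.

(** * Tails and thresholds *)

Section minimization.
Context {R : realType} {n : option nat} {a : nat -> R} {c : R}.
Hypotheses (hn : two_le n)
  (ha_pos : forall i, inI n i -> 0 < a i)
  (ha_noninc : forall i, inI n i -> inI n i.+1 -> a i.+1 <= a i)
  (ha_sum : (\sum_(0 <= i <oo | inI n i) (a i)%:E <= 1)%E)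
  (ha_eta : (\sum_(0 <= i <oo | inI n i) (etaR (a i))%:E < +oo)%E)
  (hc : 0 <= c).

Local Notation P := (inI n).
Local Notation D := (dsum n a).
Local Notation S := (ssum n a).
Local Notation b_ := (bk n a c).

Lemma a_ge0 i : P i -> 0 <= a i.
Proof. by move/ha_pos/ltW. Qed.

Lemma a_le1 i : P i -> a i <= 1.
Proof.
move=> Pi; rewrite -lee_fin; apply: le_trans ha_sum.
by apply: nneseries_ge_term => // j /a_ge0; rewrite lee_fin.
Qed.

Lemma a_summable : (\sum_(0 <= i <oo | P i) (a i)%:E < +oo)%E.
Proof. by apply: le_lt_trans ha_sum _; rewrite ltry. Qed.

Lemma etaR_a_ge0 i : P i -> 0 <= etaR (a i).
Proof. by move/a_le1/etaR_ge0. Qed.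

Lemma cvg_dsum k : (fun N => \sum_(0 <= i < N | (k < i)%N && P i) a i) @ \oo --> D k.
Proof. exact: cvg_tailsum a_ge0 a_summable k. Qed.

Lemma cvg_ssum k :
  (fun N => \sum_(0 <= i < N | (k < i)%N && P i) etaR (a i)) @ \oo --> S k.
Proof. exact: cvg_tailsum etaR_a_ge0 ha_eta k. Qed.

Lemma dsum_peel {i} : P i -> D i.-1 = a i + D i.
Proof. by move=> Pi; have := tailsum_peel a_ge0 a_summable (inI_gt0 Pi) Pi. Qed.

Lemma ssum_peel {i} : P i -> S i.-1 = etaR (a i) + S i.
Proof. by move=> Pi; have := tailsum_peel etaR_a_ge0 ha_eta (inI_gt0 Pi) Pi. Qed.

Lemma dsum_ge0 k : 0 <= D k.
Proof. exact: tailsum_ge0 a_ge0. Qed.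

Lemma dsum_gt0 {k} : lt_n n k -> 0 < D k.
Proof.
by move=> /inI_S Pk; rewrite -[k]/(k.+1.-1) dsum_peel // ltr_wpDr ?dsum_ge0 ?ha_pos.
Qed.

Lemma dsum_last {m} : n = Some m -> D m = 0.
Proof. by move=> nm; apply: tailsum_eq0 => i; rewrite /inI nm /=; lia. Qed.

Lemma ssum_last {m} : n = Some m -> S m = 0.
Proof. by move=> nm; apply: tailsum_eq0 => i; rewrite /inI nm /=; lia. Qed.

Lemma ln_a_le {i j} : (0 < i)%N -> (i <= j)%N -> P j -> ln (a j) <= ln (a i).
Proof.
move=> i0 ij Pj; have Pi := inI_mono i0 ij Pj.
rewrite ler_ln ?posrE ?ha_pos //; elim: j ij Pj => [|j IH]; first by rewrite leqn0 => /eqP ->.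
rewrite leq_eqVlt => /orP[/eqP -> // | ij] Pj.
have Pj' := inI_pred Pj (leq_ltn_trans i0 ij).
exact: le_trans (ha_noninc _ Pj' Pj) (IH ij Pj').
Qed.

Lemma bkE {j} : P j -> b_ j = (S j + D j * ln (a j))%:E.
Proof.
case: j => [/inI_gt0 // | j] Pj; rewrite /bk (dsum_peel Pj) (ssum_peel Pj) etaRE ?ha_pos //.
by congr EFin; ring.
Qed.

Lemma ssum_dsum_ln_ge0 {j} : P j -> 0 <= S j + D j * ln (a j).
Proof.
move=> Pj; pose u i := etaR (a i) + ln (a j) * a i.
have cvg_u : (fun N => \sum_(0 <= i < N | (j < i)%N && P i) u i) @ \oo -->
    S j + ln (a j) * D j.
  apply: cvg_trans (cvgD (cvg_ssum j) (cvgM (cvg_cst _) (cvg_dsum j))).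
  by apply: near_eq_cvg; near=> N; rewrite /= big_split -mulr_sumr.
rewrite mulrC; apply: (closed_cvg (fun x : R => 0 <= x)) cvg_u; first exact: closed_ge.
near=> N; apply: sumr_ge0 => i /andP[ji Pi].
rewrite /u etaRE ?ha_pos // (_ : _ + _ = a i * (ln (a j) - ln (a i))); last by ring.
rewrite mulr_ge0 ?a_ge0 // subr_ge0.
exact: ln_a_le (inI_gt0 Pj) (ltnW ji) Pi.
Unshelve. all: by end_near.
Qed.

Lemma b1E : S 0 + D 0 * ln (a 1) = S 1 + D 1 * ln (a 1).
Proof. by have [] := bkE (inI1 hn). Qed.

Lemma b1_ge0 : 0 <= S 0 + D 0 * ln (a 1).
Proof. by rewrite b1E; exact: ssum_dsum_ln_ge0 (inI1 hn). Qed.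

Lemma bk_leS {k} : lt_n n k -> (b_ k.+1 <= b_ k)%E.
Proof.
case: k => [_ | k kn].
  rewrite /bk; case: ifP => cD0; last by rewrite leey.
  rewrite lee_fin ler_pdivlMr ?subr_gt0 // ler_piMr ?b1_ge0 //.
  by rewrite lerBlDr lerDl mulr_ge0 ?dsum_ge0.
have Pk := inI_le kn (ltn0Sn k) (leqnn _).
rewrite (bkE Pk) /= lee_fin lerD2l ler_wpM2l ?dsum_ge0 //.
exact: ln_a_le (ltn0Sn k) (leqnSn _) (inI_S kn).
Qed.

Lemma bk_le {i j} : (i <= j)%N -> le_n n j -> (b_ j <= b_ i)%E.
Proof.
elim: j => [|j IH]; first by rewrite leqn0 => /eqP ->.
rewrite leq_eqVlt => /orP[/eqP -> // | ij] jn.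
have jlt : lt_n n j by case: n jn.
exact: le_trans (bk_leS jlt) (IH ij (lt_n_le_n jlt)).
Qed.

Lemma bk_last {m} : n = Some m -> b_ m = 0%E.
Proof.
by move=> nm; rewrite (bkE (inI_last hn nm)) (dsum_last nm) (ssum_last nm) mul0r addr0.
Qed.

Lemma bk0_le_finite {b} : (b_ 0 <= b%:E)%E -> c * D 0 < 1.
Proof. by rewrite /bk; case: ifP. Qed.

Lemma bk_lt_eventually {b} : 0 < b -> exists j, (b_ j.+1 < b%:E)%E.
Proof.
move=> b0; case nm : n => [m|]; rewrite -nm.
  exists m.-1; rewrite prednK; first by rewrite (bk_last nm) lte_fin.
  by move: hn; rewrite nm /=; lia.
have [N _ SN] := cvgr_lt 0 (tailsum_cvg0 etaR_a_ge0 ha_eta) b b0.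
have PN : P N.+1 by rewrite /inI nm.
exists N; rewrite /= lte_fin; apply: le_lt_trans (SN N (leqnn N)).
by rewrite gerDl mulr_ge0_le0 ?dsum_ge0 // ln_le0 // a_le1.
Qed.

Lemma region_cases {b} : 0 < b ->
  (b_ 0 <= b%:E)%E \/ exists2 k, lt_n n k & (b_ k.+1 <= b%:E < b_ k)%E.
Proof.
move=> b0; have [j bj] := bk_lt_eventually b0.
have last_le m : n = Some m -> (b_ m <= b%:E)%E by move/bk_last ->; rewrite lee_fin ltW.
have [|[k kn /andP[lo hi]]] :=
  first_index (fun j => b_ j <= b%:E)%E (ex_intro _ j.+1 (ltW bj)) last_le.
  by left.
by right; exists k; rewrite // lo ltNge.
Qed.

Lemma region_cases_lt {b} : 0 < b ->
  (b_ 0 < b%:E)%E \/ exists2 k, lt_n n k & (b_ k.+1 < b%:E <= b_ k)%E.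
Proof.
move=> b0; have [j bj] := bk_lt_eventually b0.
have last_lt m : n = Some m -> (b_ m < b%:E)%E by move/bk_last ->; rewrite lte_fin.
have [|[k kn /andP[lo hi]]] :=
  first_index (fun j => b_ j < b%:E)%E (ex_intro _ j.+1 bj) last_lt.
  by left.
by right; exists k; rewrite // lo leNgt.
Qed.

(** * Candidates and minimizers *)

Definition is_minimizer (b : R) (x : nat -> R) : Prop :=
  [/\ Omega n a c x, (forall i, inI n i -> 0 <= x i),
      Fsum n b x = infOmega n a c b &
      (forall y, Omega n a c y -> (forall i, inI n i -> 0 <= y i) ->
         Fsum n b y = infOmega n a c b -> forall i, inI n i -> y i = x i)].

(* Stationarity of the Lagrangian gives b x_i = nu - ln a_i for the free
   coordinates i > k; the coordinates i <= k are frozen at t. *)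
Definition candidate (k : nat) (t nu b : R) (i : nat) : R :=
  if (i <= k)%N then t else b^-1 * (nu - ln (a i)).

Lemma candidate_continuous k t (nu : R -> R) i b0 :
  b0 != 0 -> {for b0, continuous nu} ->
  {for b0, continuous (fun b => candidate k t (nu b) b i)}.
Proof.
move=> b00 nuc; rewrite /candidate; case: (i <= k)%N; first exact: cvg_cst.
by apply: cvgM; [exact: cvgV | apply: cvgB nuc _; exact: cvg_cst].
Qed.

(* In both candidates nu is the level making sum_i a_i x_i = 1. *)
Definition candidate_Bk k b := candidate k 0 ((b - S k) / D k) b.

Definition candidate_Bc b := candidate 1 c ((b * (1 - a 1 * c) - S 1) / D 1) b.

Lemma Omega_ge0 {x} : Omega n a c x -> forall i, P i -> 0 <= x i.
Proof.
case=> /andP[x10 _] xmon _; elim=> [/inI_gt0 // | [_ _ // | i IH Pi]].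
exact: le_trans (IH (inI_pred Pi isT)) (xmon _ Pi isT).
Qed.

Lemma lagrange_sum b lam z : 0 <= lam -> Omega n a c z ->
  (\sum_(0 <= i <oo | P i) (lagrange_term b (lam * a i) (z i))%:E
   = Fsum n b z + lam%:E)%E.
Proof.
move=> lam0 Oz; have [_ _ az1] := Oz.
have az0 i : P i -> (0 <= (a i * z i)%:E)%E.
  by move=> Pi; rewrite lee_fin mulr_ge0 ?a_ge0 //; exact: Omega_ge0 Oz i Pi.
under eq_eseriesr do rewrite /lagrange_term EFinD -mulrA EFinM.
rewrite nneseriesD => [|i _ _|i _ Pi]; last 2 first.
- by rewrite lee_fin expR_ge0.
- by apply: mule_ge0; [rewrite lee_fin | exact: az0].
by rewrite nneseriesZl // az1 mule1.
Qed.

Lemma lagrange_minimizer b lam x : 0 <= lam -> Omega n a c x -> (Fsum n b x < +oo)%E ->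
  (forall i, P i -> forall y, 0 <= y -> (i = 1%N -> y <= c) ->
     y = x i \/ lagrange_term b (lam * a i) (x i) < lagrange_term b (lam * a i) y) ->
  is_minimizer b x.
Proof.
move=> lam0 Ox Fx xmin.
have admissible y i : Omega n a c y -> P i -> 0 <= y i /\ (i = 1%N -> y i <= c).
  by move=> Oy Pi; split; [exact: Omega_ge0 | case: Oy => /andP[_ ?] _ _ ->].
have term_le y i : Omega n a c y -> P i ->
    0 <= lagrange_term b (lam * a i) (x i) <= lagrange_term b (lam * a i) (y i).
  move=> Oy Pi; have [y0 y1] := admissible y i Oy Pi.
  have x0 := Omega_ge0 Ox i Pi; rewrite addr_ge0 ?expR_ge0 ?mulr_ge0 ?a_ge0 //=.
  by have [->|/ltW] := xmin i Pi (y i) y0 y1.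
have Fle y : Omega n a c y -> (Fsum n b x <= Fsum n b y)%E.
  move=> Oy; rewrite -(@leeD2rE _ lam%:E) // -!lagrange_sum //.
  apply: lee_nneseries => [i _ Pi|i Pi]; rewrite lee_fin.
    by case/andP: (term_le x i Ox Pi).
  by case/andP: (term_le y i Oy Pi).
have Finf : Fsum n b x = infOmega n a c b.
  apply/eqP; rewrite eq_le ereal_inf_lbound ?andbT; last by exists x.
  by apply: le_ereal_inf_tmp => _ [y Oy <-]; exact: Fle.
split => //; first exact: Omega_ge0.
move=> y Oy _ Fy i Pi; have [y0 y1] := admissible y i Oy Pi.
have [//|lt] := xmin i Pi (y i) y0 y1.
suff : (Fsum n b x + lam%:E < Fsum n b y + lam%:E)%E by rewrite Fy -Finf ltxx.
rewrite -!lagrange_sum //; apply: (lt_nneseries_term _ Pi lt).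
  by move=> j Pj; exact: term_le.
by rewrite lagrange_sum // lte_add_pinfty ?ltry.
Qed.

Lemma candidate_constraint k t nu b : lt_n n k ->
  (\sum_(0 <= i <oo | P i) (a i * candidate k t nu b i)%:E)%E =
  (t * \sum_(1 <= i < k.+1) a i + b^-1 * (nu * D k + S k))%:E.
Proof.
move=> kn; apply: eseries_EFin_cvg.
apply: cvg_trans (cvgD (cvg_cst _)
  (cvgM (cvg_cst _) (cvgD (cvgM (cvg_cst nu) (cvg_dsum k)) (cvg_ssum k)))).
apply: near_eq_cvg; near=> N; rewrite /= !fctE /=.
rewrite (big_inI_split kn); last by near: N; exists k.+1.
congr (_ + _).
  rewrite mulr_sumr big_nat_cond [in RHS]big_nat_cond.
  by apply: eq_bigr => i /andP[/andP[_ ik] _]; rewrite /candidate -ltnS ik mulrC.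
rewrite mulr_sumr -big_split mulr_sumr; apply: eq_bigr => i /andP[ki Pi].
by rewrite /candidate leqNgt ki etaRE ?ha_pos //=; ring.
Unshelve. all: by end_near.
Qed.

Lemma Fsum_candidate k t nu b : lt_n n k -> 0 < b ->
  Fsum n b (candidate k t nu b) = (k%:R * expR (- (b * t)) + expR (- nu) * D k)%:E.
Proof.
move=> kn b0; apply: eseries_EFin_cvg.
apply: cvg_trans (cvgD (cvg_cst _) (cvgM (cvg_cst _) (cvg_dsum k))).
apply: near_eq_cvg; near=> N; rewrite /= !fctE /=.
rewrite (big_inI_split kn); last by near: N; exists k.+1.
congr (_ + _).
  rewrite big_nat_cond (eq_bigr (fun _ => expR (- (b * t)))); last first.
    by move=> i /andP[/andP[_ ik] _]; rewrite /candidate -ltnS ik.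
  by rewrite -big_nat_cond sumr_const_nat subn1 mulr_natl.
rewrite mulr_sumr; apply: eq_bigr => i /andP[ki Pi].
rewrite /candidate leqNgt ki /= mulVKf ?gt_eqF // opprB expRD lnK ?posrE ?ha_pos //.
by rewrite mulrC.
Unshelve. all: by end_near.
Qed.

Lemma candidate_nondecreasing k t nu b : 0 < b -> t <= b^-1 * (nu - ln (a k.+1)) ->
  forall i, P i -> (1 < i)%N -> candidate k t nu b i.-1 <= candidate k t nu b i.
Proof.
move=> b0 tk i Pi i1; rewrite /candidate.
have [ik|ki] := leqP i k; first by rewrite (leq_trans (leq_pred i) ik).
have [ik'|ki'] := leqP i.-1 k; first by rewrite (_ : i = k.+1) //; lia.
rewrite ler_pM2l ?invr_gt0 // lerD2l lerN2.
by apply: ln_a_le (leq_pred i) Pi; lia.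
Qed.

Lemma candidate_argmin_tail k t nu b i y : 0 < b -> P i -> (k < i)%N ->
  y = candidate k t nu b i \/
  lagrange_term b (b * expR (- nu) * a i) (candidate k t nu b i)
    < lagrange_term b (b * expR (- nu) * a i) y.
Proof.
move=> b0 Pi ki; apply: lagrange_term_argmin => //.
rewrite /candidate leqNgt ki /= mulVKf ?gt_eqF // opprB expRD lnK ?posrE ?ha_pos //.
ring.
Qed.

Lemma candidate_minimizer k t nu b : lt_n n k -> 0 < b -> Omega n a c (candidate k t nu b) ->
  (forall i, P i -> (i <= k)%N -> forall y, 0 <= y -> (i = 1%N -> y <= c) ->
     y = t \/ lagrange_term b (b * expR (- nu) * a i) t
               < lagrange_term b (b * expR (- nu) * a i) y) ->
  is_minimizer b (candidate k t nu b).
Proof.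
move=> kn b0 Ox head; apply: (@lagrange_minimizer _ (b * expR (- nu))) => //.
- by rewrite mulr_ge0 ?expR_ge0 ?ltW.
- by rewrite Fsum_candidate // ltry.
move=> i Pi y y0 y1; have [ik|ki] := leqP i k; last exact: candidate_argmin_tail.
by rewrite /candidate ik; exact: head.
Qed.

Lemma ln_a_le_nu_Bk {k b} : lt_n n k -> (b_ k.+1 <= b%:E)%E ->
  forall i, P i -> (k < i)%N -> ln (a i) <= (b - S k) / D k.
Proof.
move=> kn /= + i Pi ki; rewrite lee_fin ler_pdivlMr ?dsum_gt0 // => hlo.
have := ln_a_le (ltn0Sn k) ki Pi; have := dsum_gt0 kn; nra.
Qed.

Lemma nu_Bk_le_ln_a {k b} : lt_n n k -> (b%:E <= b_ k)%E ->
  forall i, (0 < i)%N -> (i <= k)%N -> (b - S k) / D k <= ln (a i).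
Proof.
move=> kn + i i0 ik; have Pk := inI_le kn (leq_trans i0 ik) (leqnn k).
rewrite (bkE Pk) lee_fin ler_pdivrMr ?dsum_gt0 // => hhi.
have := ln_a_le i0 ik Pk; have := dsum_gt0 kn; nra.
Qed.

Lemma nu_B0_le {b} : 0 <= b -> (b%:E <= b_ 0)%E -> (b - S 0) / D 0 - ln (a 1) <= b * c.
Proof.
move=> b0; have D0 := dsum_gt0 (lt_n0 hn); have v0 := b1_ge0.
rewrite -(ler_pM2r D0) mulrBl divfK ?gt_eqF // /bk.
case: ifP => [cD0 | /negbT]; first by rewrite lee_fin ler_pdivlMr ?subr_gt0 //; nra.
by rewrite -leNgt => cD0 _; nra.
Qed.

Lemma minimizer_candidate_Bk {k b} : lt_n n k -> 0 < b ->
  (b_ k.+1 <= b%:E)%E -> (b%:E <= b_ k)%E ->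
  is_minimizer b (candidate_Bk k b).
Proof.
move=> kn b0 hlo hhi; have Dk := dsum_gt0 kn.
have tail_le := ln_a_le_nu_Bk kn hlo.
have xk1 : 0 <= b^-1 * ((b - S k) / D k - ln (a k.+1)).
  by apply: mulr_ge0; [rewrite invr_ge0 ltW | rewrite subr_ge0 tail_le ?inI_S].
apply: candidate_minimizer => //.
- split.
  + rewrite /candidate_Bk /candidate; case: (leqP 1 k) => [_ | k0]; first by rewrite lexx hc.
    have k_eq0 : k = 0%N by lia.
    subst k.
    rewrite /= xk1 -(ler_pM2l b0) mulrA mulfV ?gt_eqF // mul1r.
    exact: nu_B0_le (ltW b0) hhi.
  + exact: candidate_nondecreasing.
  + by rewrite candidate_constraint // mul0r add0r divfK ?gt_eqF // subrK mulVf ?gt_eqF.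
- move=> i Pi ik y y0 _; apply: lagrange_term_argmin0 => //.
  rewrite -mulrA ler_pMr // expRM_ge1E ?ha_pos // opprK.
  exact: nu_Bk_le_ln_a kn hhi i (inI_gt0 Pi) ik.
Qed.

Lemma Fsum_candidate_Bk k b : lt_n n k -> 0 < b ->
  Fsum n b (candidate_Bk k b) = (termk n a k b)%:E.
Proof.
move=> kn b0; rewrite Fsum_candidate // mulr0 oppr0 expR0 mulr1 /termk.
by rewrite mulrC -mulNr opprB.
Qed.

Lemma nu_Bc_ge {b} : (b_ 0 <= b%:E)%E ->
  ln (a 1) + b * c <= (b * (1 - a 1 * c) - S 1) / D 1.
Proof.
move=> hb; have cD0 := bk0_le_finite hb; have D1 := dsum_gt0 (lt_n1 hn).
have D0E := dsum_peel (inI1 hn).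
move: hb; rewrite /= in D0E; rewrite /bk cD0 lee_fin ler_pdivrMr ?subr_gt0 // b1E D0E.
by rewrite ler_pdivlMr // => hb; nra.
Qed.

Lemma minimizer_candidate_Bc {b} : 0 < b -> (b_ 0 <= b%:E)%E -> is_minimizer b (candidate_Bc b).
Proof.
move=> b0 hb; have D1 := dsum_gt0 (lt_n1 hn); have P1 := inI1 hn.
have := nu_Bc_ge hb; set nu := (_ / D 1) => nu_ge.
apply: candidate_minimizer => //; first exact: lt_n1.
- split.
  + by rewrite /candidate lexx hc.
  + apply: candidate_nondecreasing => //.
    rewrite -(ler_pM2l b0) mulrA mulfV ?gt_eqF // mul1r.
    by rewrite -/nu; have := ln_a_le (ltn0Sn 0) (leqnSn 1) (inI_S (lt_n1 hn)); lra.
  + rewrite candidate_constraint ?lt_n1 // big_nat1 /nu divfK ?gt_eqF // subrK.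
    by rewrite mulKf ?gt_eqF //; congr EFin; ring.
- move=> i Pi i1 y _ yc; have i_eq1 : i = 1%N by have := inI_gt0 Pi; lia.
  subst i; apply: lagrange_term_argmin_top => //; last exact: yc.
  rewrite -/nu -mulrA ler_pM2l // -{1}(lnK (ha_pos 1 P1)) -expRD ler_expR; lra.
Qed.

Lemma Fsum_candidate_Bc b : 0 < b -> Fsum n b (candidate_Bc b) = (termc n a c b)%:E.
Proof.
move=> b0; have D1 := dsum_gt0 (lt_n1 hn); have D0E := dsum_peel (inI1 hn).
rewrite Fsum_candidate ?lt_n1 // mul1r /termc; congr EFin.
have -> : - ((b * (1 - a 1 * c) - S 1) / D 1) =
    - (b * c) + (S 1 - b * (1 - c * D 0)) / D 1.
  by rewrite /= in D0E; rewrite D0E; field; rewrite gt_eqF.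
by rewrite expRD; ring.
Qed.

Lemma minimizer_unique {b x y} : is_minimizer b x -> is_minimizer b y ->
  forall i, P i -> y i = x i.
Proof. by case=> _ _ _ ux [Oy y0 Fy _]; exact: ux. Qed.

Lemma minimizer_eq_candidate_Bk {x k b} : lt_n n k -> 0 < b ->
  (b_ k.+1 <= b%:E)%E -> (b%:E <= b_ k)%E -> is_minimizer b x ->
  forall i, P i -> x i = candidate_Bk k b i.
Proof. by move=> kn b0 lo hi; apply: minimizer_unique; exact: minimizer_candidate_Bk. Qed.

Lemma minimizer_eq_candidate_Bc {x b} : 0 < b -> (b_ 0 <= b%:E)%E -> is_minimizer b x ->
  forall i, P i -> x i = candidate_Bc b i.
Proof.
by move=> b0 hb; apply: minimizer_unique; apply: minimizer_candidate_Bc b0 hb.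
Qed.

Lemma exists_minimizer {b} : 0 < b -> exists x, is_minimizer b x.
Proof.
move=> b0; have [hb | [k kn /andP[lo hi]]] := region_cases b0.
  by exists (candidate_Bc b); exact: minimizer_candidate_Bc b0 hb.
by exists (candidate_Bk k b); exact: minimizer_candidate_Bk kn b0 lo (ltW hi).
Qed.

Lemma infOmega_Bk {k b} : lt_n n k -> 0 < b ->
  (b_ k.+1 <= b%:E)%E -> (b%:E <= b_ k)%E -> infOmega n a c b = (termk n a k b)%:E.
Proof.
move=> kn b0 lo hi; have [_ _ <- _] := minimizer_candidate_Bk kn b0 lo hi.
exact: Fsum_candidate_Bk.
Qed.

Lemma infOmega_Bc {b} : 0 < b -> (b_ 0 <= b%:E)%E -> infOmega n a c b = (termc n a c b)%:E.
Proof.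
move=> b0 hb; have [_ _ <- _] := minimizer_candidate_Bc b0 hb; exact: Fsum_candidate_Bc.
Qed.

Lemma minimizer_on_Bk {x k b} : 0 < b -> lt_n n k ->
  (b_ k.+1 <= b%:E)%E -> (b%:E <= b_ k)%E -> is_minimizer b x ->
  [/\ forall i, (1 <= i <= k)%N -> x i = 0,
      forall i, P i -> (k < i)%N -> x i = b^-1 * ((b - S k) / D k - ln (a i)) &
      Fsum n b x = (termk n a k b)%:E].
Proof.
move=> b0 kn lo hi xmin; have x_eq := minimizer_eq_candidate_Bk kn b0 lo hi xmin.
split.
- by move=> i /andP[i1 ik]; rewrite x_eq ?(inI_le kn i1 ik) // /candidate_Bk /candidate ik.
- by move=> i Pi ki; rewrite x_eq // /candidate_Bk /candidate leqNgt ki.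
- by case: xmin => _ _ -> _; exact: infOmega_Bk.
Qed.

Lemma minimizer_on_Bc {x b} : 0 < b -> (b_ 0 <= b%:E)%E -> is_minimizer b x ->
  [/\ x 1%N = c,
      forall i, P i -> (1 < i)%N ->
        x i = b^-1 * ((b * (1 - a 1 * c) - S 1) / D 1 - ln (a i)) &
      Fsum n b x = (termc n a c b)%:E].
Proof.
move=> b0 hb xmin; have x_eq := minimizer_eq_candidate_Bc b0 hb xmin.
split.
- by rewrite x_eq ?(inI1 hn) // /candidate_Bc /candidate lexx.
- by move=> i Pi i1; rewrite x_eq // /candidate_Bc /candidate leqNgt i1.
- by case: xmin => _ _ -> _; exact: infOmega_Bc.
Qed.

(** * Value of the infimum *)

Lemma inB_eq {k k' b} : lt_n n k -> lt_n n k' -> inB n a c k b -> inB n a c k' b -> k' = k.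
Proof.
move=> kn k'n /andP[lo hi] /andP[lo' hi'].
have disjoint j j' : lt_n n j' -> (j < j')%N ->
    (b_ j.+1 <= b%:E)%E -> (b%:E < b_ j')%E -> False.
  move=> j'n jj' loj hij'.
  by have := lt_le_trans hij' (le_trans (bk_le jj' (lt_n_le_n j'n)) loj); rewrite ltxx.
case: (ltngtP k k') => // kk'; first by case: (disjoint k k' k'n kk' lo hi').
by case: (disjoint k' k kn kk' lo' hi).
Qed.

Lemma inB_ge_bk0 {k b} : lt_n n k -> (b_ 0 <= b%:E)%E -> ~~ inB n a c k b.
Proof.
move=> kn hb; apply/negP => /andP[_ hi].
by have := lt_le_trans hi (le_trans (bk_le (leq0n k) (lt_n_le_n kn)) hb); rewrite ltxx.
Qed.

Lemma infOmega_zc b : 0 < b -> infOmega n a c b = zc n a c b.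
Proof.
move=> b0; rewrite /zc; have [hb | [k kn hk]] := region_cases b0.
  rewrite eseries0 => [|k _ kn]; last by rewrite (negbTE (inB_ge_bk0 kn hb)).
  by rewrite add0e hb infOmega_Bc.
have hkB : inB n a c k b := hk.
have bk0_gt : ~~ (b_ 0 <= b%:E)%E.
  case/andP: hk => _ hi; rewrite -ltNge.
  exact: lt_le_trans hi (bk_le (leq0n k) (lt_n_le_n kn)).
rewrite (negbTE bk0_gt) adde0 (eseries_single _ _ 0 k) // ?hkB; last first.
  by move=> k' k'n k'k; case: ifPn => // hk'; rewrite (inB_eq kn k'n hkB hk') eqxx in k'k.
by case/andP: hk => lo hi; rewrite (infOmega_Bk kn b0 lo (ltW hi)).
Qed.

Lemma bk1_eq_bk0 : c = 0 -> b_ 1 = b_ 0.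
Proof. by move=> c0; rewrite /bk c0 mul0r ltr01 subr0 divr1. Qed.

Lemma infOmega_z0 : c = 0 -> forall b, 0 < b -> infOmega n a c b = z0 n a c b.
Proof.
move=> c0 b b0; rewrite /z0; have [hb | [k kn hk]] := region_cases b0.
  have b2 : (b_ 2 <= b%:E)%E.
    by apply: le_trans (bk_leS (lt_n1 hn)) _; rewrite bk1_eq_bk0.
  rewrite (eseries_single _ _ 1 1) //; last 2 first.
  - exact: lt_n1.
  - by move=> k kn k1; rewrite /inB' (negbTE k1) (negbTE (inB_ge_bk0 kn hb)).
  rewrite /inB' eqxx b2 infOmega_Bc // /termc /termk c0.
  by rewrite !(mul0r, mulr0, oppr0, expR0, subr0, mul1r, mulr1).
have hkB : inB n a c k b := hk.
have k_gt0 : (0 < k)%N.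
  by case: k kn hk {hkB} => // _ /andP[lo]; rewrite -bk1_eq_bk0 // ltNge lo.
have hkB' : inB' n a c k b.
  by rewrite /inB'; case: eqP => [k1 | _ //]; subst k; case/andP: hk.
rewrite (eseries_single _ _ 1 k) // ?hkB'; last first.
  move=> k' k'n k'k; case: ifPn => // + ; rewrite /inB'; case: eqP => [k'1 b2 | _ hk'].
    have k2 : (2 <= k)%N by move: k'k; rewrite k'1; lia.
    case/andP: hk => _ hi.
    by have := lt_le_trans hi (le_trans (bk_le k2 (lt_n_le_n kn)) b2); rewrite ltxx.
  by rewrite (inB_eq kn k'n hkB hk') eqxx in k'k.
by case/andP: hk => lo hi; rewrite (infOmega_Bk kn b0 lo (ltW hi)).
Qed.

(** * Continuity in b *)

Lemma candidate_Bk_continuous k i b0 : 0 < b0 ->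
  {for b0, continuous (fun b => candidate_Bk k b i)}.
Proof.
move=> b00; apply: candidate_continuous; first by rewrite gt_eqF.
by apply: cvgM; [apply: cvgB; [exact: cvg_id | exact: cvg_cst] | exact: cvg_cst].
Qed.

Lemma candidate_Bc_continuous i b0 : 0 < b0 ->
  {for b0, continuous (fun b => candidate_Bc b i)}.
Proof.
move=> b00; apply: candidate_continuous; first by rewrite gt_eqF.
apply: cvgM; last exact: cvg_cst.
by apply: cvgB; [apply: cvgM; [exact: cvg_id | exact: cvg_cst] | exact: cvg_cst].
Qed.

Section continuity.
Variable xb : R -> nat -> R.
Hypothesis xbP : forall b, 0 < b -> is_minimizer b (xb b).

Lemma minimizer_near_right {i b0} : P i -> 0 < b0 -> exists2 g : R -> R,
  {for b0, continuous g} & \forall b \near b0, b0 <= b -> xb b i = g b.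
Proof.
move=> Pi b00; have [hb | [k kn /andP[lo hi]]] := region_cases b00.
  exists (fun b => candidate_Bc b i); first exact: candidate_Bc_continuous.
  near=> b => b0b; have b_pos := lt_le_trans b00 b0b.
  have hb' : (b_ 0 <= b%:E)%E by apply: le_trans hb _; rewrite lee_fin.
  exact: minimizer_eq_candidate_Bc b_pos hb' (xbP _ b_pos) i Pi.
exists (fun b => candidate_Bk k b i); first exact: candidate_Bk_continuous.
have near_hi : \forall b \near b0, (b%:E < b_ k)%E.
  by apply: open_nbhs_nbhs; split; [exact: open_ereal_lt | exact: hi].
near=> b => b0b; have b_pos := lt_le_trans b00 b0b.
apply: minimizer_eq_candidate_Bk kn b_pos _ _ (xbP _ b_pos) i Pi.
- by apply: le_trans lo _; rewrite lee_fin.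
- by apply: ltW; near: b.
Unshelve. all: by end_near.
Qed.

Lemma minimizer_near_left {i b0} : P i -> 0 < b0 -> exists2 g : R -> R,
  {for b0, continuous g} & \forall b \near b0, b <= b0 -> xb b i = g b.
Proof.
move=> Pi b00; have near_pos : \forall b \near b0, 0 < b := lt_nbhsr b00.
have [hb | [k kn /andP[lo hi]]] := region_cases_lt b00.
  exists (fun b => candidate_Bc b i); first exact: candidate_Bc_continuous.
  have near_lo : \forall b \near b0, (b_ 0 < b%:E)%E.
    by apply: open_nbhs_nbhs; split; [exact: open_ereal_gt | exact: hb].
  near=> b => _; have b_pos : 0 < b by near: b.
  by apply: (minimizer_eq_candidate_Bc b_pos _ (xbP _ b_pos) i Pi); apply: ltW; near: b.
exists (fun b => candidate_Bk k b i); first exact: candidate_Bk_continuous.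
have near_lo : \forall b \near b0, (b_ k.+1 < b%:E)%E.
  by apply: open_nbhs_nbhs; split; [exact: open_ereal_gt | exact: lo].
near=> b => bb0; have b_pos : 0 < b by near: b.
apply: minimizer_eq_candidate_Bk kn b_pos _ _ (xbP _ b_pos) i Pi.
- by apply: ltW; near: b.
- by apply: le_trans hi; rewrite lee_fin.
Unshelve. all: by end_near.
Qed.

Lemma minimizer_continuous i : P i -> forall b0, 0 < b0 ->
  {for b0, continuous (fun b => xb b i)}.
Proof.
move=> Pi b0 b00; have [gl glc glE] := minimizer_near_left Pi b00.
have [gr grc grE] := minimizer_near_right Pi b00.
exact: continuous_at_glue glc grc glE grE.
Qed.

End continuity.

Lemma exists_minimizer_family :
  exists xb : R -> nat -> R, forall b, 0 < b -> is_minimizer b (xb b).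
Proof.
have minimizer_at b : exists x : nat -> R, 0 < b -> is_minimizer b x.
  have [b0 | _] := ltrP 0 b; last by exists (fun=> 0).
  by have [x xmin] := exists_minimizer b0; exists x.
by have [xb xbP] := choice minimizer_at; exists xb.
Qed.

End minimization.

Theorem lemma2 (R : realType) (n : option nat) (a : nat -> R) (c : R)
  (hn : two_le n)
  (ha_pos : forall i, inI n i -> 0 < a i)
  (ha_noninc : forall i, inI n i -> inI n i.+1 -> a i.+1 <= a i)
  (ha_sum : (\sum_(0 <= i <oo | inI n i) (a i)%:E <= 1)%E)
  (ha_eta : (\sum_(0 <= i <oo | inI n i) (etaR (a i))%:E < +oo)%E)
  (hc : 0 <= c) :
  exists xb : R -> nat -> R,
    (* existence and uniqueness of the minimizer *)
    (forall b, 0 < b ->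
       [/\ Omega n a c (xb b),
           (forall i, inI n i -> 0 <= xb b i),
           Fsum n b (xb b) = infOmega n a c b &
           (forall y, Omega n a c y -> (forall i, inI n i -> 0 <= y i) ->
              Fsum n b y = infOmega n a c b ->
              forall i, inI n i -> y i = xb b i)])
    (* first case: b in [b_1, b_0] ∩ (0, +oo) *)
    /\ (forall b, 0 < b -> (bk n a c 1 <= b%:E)%E -> (b%:E <= bk n a c 0)%E ->
          (forall i, inI n i ->
             xb b i = b^-1 * ((b - ssum n a 0) / dsum n a 0 - ln (a i)))
          /\ Fsum n b (xb b)
             = (dsum n a 0 * expR ((ssum n a 0 - b) / dsum n a 0))%:E)
    (* second case: b in [b_{k+1}, b_k) ∩ (0, +oo), k in I_{n-1} *)
    /\ (forall b k, 0 < b -> (0 < k)%N -> lt_n n k ->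
          (bk n a c k.+1 <= b%:E)%E -> (b%:E < bk n a c k)%E ->
          [/\ (forall i, (1 <= i <= k)%N -> xb b i = 0),
              (forall i, inI n i -> (k < i)%N ->
                 xb b i = b^-1 * ((b - ssum n a k) / dsum n a k - ln (a i))) &
              Fsum n b (xb b)
              = (k%:R + dsum n a k * expR ((ssum n a k - b) / dsum n a k))%:E])
    (* third case: b_0 < +oo and b > b_0 *)
    /\ (forall b, 0 < b -> (bk n a c 0 < +oo)%E -> (bk n a c 0 < b%:E)%E ->
          [/\ xb b 1%N = c,
              (forall i, inI n i -> (1 < i)%N ->
                 xb b i = b^-1 * ((b * (1 - a 1%N * c) - ssum n a 1) / dsum n a 1
                                  - ln (a i))) &
              Fsum n b (xb b)
              = (expR (- (b * c)) *
                 (1 + dsum n a 1 *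
                      expR ((ssum n a 1 - b * (1 - c * dsum n a 0)) / dsum n a 1)))%:E])
    (* continuity of b |-> x^b_i on (0, +oo) *)
    /\ (forall i, inI n i -> forall b0 : R, 0 < b0 ->
          {for b0, continuous (fun b : R => xb b i)})
    (* value of the infimum for c > 0 *)
    /\ (0 < c -> forall b, 0 < b -> infOmega n a c b = zc n a c b)
    (* the case c = 0 *)
    /\ (c = 0 -> bk n a c 1 = bk n a c 0 /\
          forall b, 0 < b -> infOmega n a c b = z0 n a c b).
Proof.
have [xb xbP] := exists_minimizer_family hn ha_pos ha_noninc ha_sum ha_eta hc.
have on_Bk := minimizer_on_Bk hn ha_pos ha_noninc ha_sum ha_eta hc.
have on_Bc := minimizer_on_Bc hn ha_pos ha_noninc ha_sum ha_eta hc.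
exists xb; split; first exact: xbP.
split.
  move=> b b0 lo hi; have [_ xE ->] := on_Bk _ 0%N b b0 (lt_n0 hn) lo hi (xbP b b0).
  by split=> [i Pi | ]; [exact: xE (inI_gt0 Pi) | rewrite /termk add0r].
split; first by move=> b k b0 _ kn lo hi; exact: on_Bk b0 kn lo (ltW hi) (xbP b b0).
split; first by move=> b b0 _ hb; exact: on_Bc b0 (ltW hb) (xbP b b0).
split; first exact: minimizer_continuous hn ha_pos ha_noninc ha_sum ha_eta hc xb xbP.
split; first by move=> _; exact: infOmega_zc hn ha_pos ha_noninc ha_sum ha_eta hc.
move=> c0; split; first exact: bk1_eq_bk0.
exact: infOmega_z0 hn ha_pos ha_noninc ha_sum ha_eta hc c0.
Qed.
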